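(* Let $(x^k)_{k\in\mathcal{K}}\in\mathcal{X}=\prod_{k\in\mathcal{K}}\mathcal{X}^k$. The following statements are equivalent: (a) $(x^k)$ is bilevel feasible; (b) $\sum_{k\in\mathcal{K}}c^\top x^k=g\bigl(\sum_{k\in\mathcal{K}}x^k_{\mathcal{A}_1}\bigr)$; (c) each $x^k$ is individually bilevel feasible, and $g\bigl(\sum_{k\in\mathcal{K}}x^k_{\mathcal{A}_1}\bigr)=\sum_{k\in\mathcal{K}}g^k(x^k_{\mathcal{A}_1})$; (d) there exists $t\ge0$ such that $f(t)=\sum_{k\in\mathcal{K}}\bigl(c^\top x^k+t^\top x^k_{\mathcal{A}_1}\bigr)$; (e) there exists $t\ge0$ such that $f^k(t)=c^\top x^k+t^\top x^k_{\mathcal{A}_1}$ for all $k\in\mathcal{K}$.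
   Context: Multi-commodity network pricing setting: $G=(\mathcal{V},\mathcal{A})$ directed graph with arc costs $c\ge0$, nonempty tolled arc set $\mathcal{A}_1\subsetneq\mathcal{A}$, $n=|\mathcal{A}_1|$, $N$ node–arc incidence matrix; finite set $\mathcal{K}$ of commodities, commodity $k$ having origin $o^k$ and destination $d^k$ connected by a path of arcs not in $\mathcal{A}_1$; $b^k_{o^k}=1$, $b^k_{d^k}=-1$, other entries $0$; $\mathcal{X}^k=\{x\in\mathbb{R}^{\mathcal{A}}: Nx=b^k,\ x\ge0\}$; $x_{\mathcal{A}_1}$ is the restriction of $x$ to $\mathcal{A}_1$. For $t\in\mathbb{R}^n$ let $f^k(t)=\min\{c^\top x+t^\top x_{\mathcal{A}_1}: x\in\mathcal{X}^k\}$ if $t\ge0$ and $f^k(t)=-\infty$ otherwise; $f=\sum_{k\in\mathcal{K}}f^k$; $g^k(w)=\sup_{t\in\mathbb{R}^n}\{f^k(t)-t^\top w\}$ and $g(w)=\sup_{t\in\mathbb{R}^n}\{f(t)-t^\top w\}$. A composed reaction $(x^k)\in\mathcal{X}$ is bilevel feasible when $\sum_k c^\top x^k=g(\sum_k x^k_{\mathcal{A}_1})$. A single $x^k\in\mathcal{X}^k$ is individually bilevel feasible when the hyperplane $\{(t,z): z=-c^\top x^k-t^\top x^k_{\mathcal{A}_1}\}$ supports $\operatorname{epi}(-f^k)$ (i.e. $\operatorname{epi}(-f^k)$ lies in $\{z\ge -c^\top x^k-t^\top x^k_{\mathcal{A}_1}\}$ and meets the hyperplane). *)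

From HB Require Import structures.
From mathcomp Require Import all_boot all_order all_algebra.
From mathcomp Require Import all_classical all_reals ereal.
Set Implicit Arguments. Unset Strict Implicit. Unset Printing Implicit Defensive.
Import Order.TTheory GRing.Theory Num.Theory.
Local Open Scope classical_set_scope.
Local Open Scope ring_scope.

Section NetworkPricing.
Variables (R : realType) (V A K : finType).
Variables (tail head : A -> V) (c : A -> R) (A1 : {set A}).
Variables (o d : K -> V).

(* the index set of tolled arcs; R^n with n = |A1| is modelled as tolled -> R *)
Definition tolled := {a : A | a \in A1}.

Fixpoint walk (u : V) (p : seq A) (v : V) : bool :=
  if p is a :: p' then (tail a == u) && walk (head a) p' v else u == v.

Definition incidence (v : V) (a : A) : R :=
  (tail a == v)%:R - (head a == v)%:R.

Definition Nmul (x : A -> R) (v : V) : R := \sum_(a : A) incidence v a * x a.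

Definition bvec (k : K) (v : V) : R := (v == o k)%:R - (v == d k)%:R.

Definition Xk (k : K) : set (A -> R) :=
  [set x | (forall v, Nmul x v = bvec k v) /\ (forall a, 0 <= x a)].

Definition restrA1 (x : A -> R) : tolled -> R := fun a => x (val a).

Definition dot (t w : tolled -> R) : R := \sum_(i : tolled) t i * w i.

Definition cost (x : A -> R) : R := \sum_(a : A) c a * x a.

Definition nonneg (t : tolled -> R) : bool := [forall i, 0 <= t i].

Definition fk (k : K) (t : tolled -> R) : \bar R :=
  if nonneg t then
    ereal_inf [set ((cost x + dot t (restrA1 x))%:E) | x in Xk k]
  else -oo%E.

Definition f (t : tolled -> R) : \bar R := (\sum_(k : K) fk k t)%E.

Definition gk (k : K) (w : tolled -> R) : \bar R :=
  ereal_sup [set (fk k t - (dot t w)%:E)%E | t in [set: tolled -> R]].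

Definition g (w : tolled -> R) : \bar R :=
  ereal_sup [set (f t - (dot t w)%:E)%E | t in [set: tolled -> R]].

Definition sum_restr (xs : K -> A -> R) : tolled -> R :=
  fun i => \sum_(k : K) restrA1 (xs k) i.

Definition bilevel_feasible (xs : K -> A -> R) : Prop :=
  ((\sum_(k : K) cost (xs k))%:E = g (sum_restr xs))%E.

Definition epi_neg_fk (k : K) : set ((tolled -> R) * R) :=
  [set tz | (- fk k tz.1 <= tz.2%:E)%E].

(* the hyperplane {(t,z) : z = -c^T x - t^T x_{A1}} supports epi(-f^k) *)
Definition indiv_bilevel_feasible (k : K) (x : A -> R) : Prop :=
  (forall tz, epi_neg_fk k tz -> - cost x - dot tz.1 (restrA1 x) <= tz.2) /\
  (exists tz, epi_neg_fk k tz /\ tz.2 = - cost x - dot tz.1 (restrA1 x)).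

End NetworkPricing.

(* The equivalences other than (b) => (e) only unfold the definitions: one
   always has f^k(t) <= c x^k + t x^k, g^k(x^k) <= c x^k and g(w) <= sum_k c x^k,
   and x^k is individually bilevel feasible iff equality holds in the first
   inequality for some t.
   For (b) => (e), shortest-path duality gives f^k(t) = max {pi(d^k) - pi(o^k) :
   pi(head a) - pi(tail a) <= c_a + t_a}; the maximizing potential is the
   length of a shortest flow from o^k.  Hence g(w) = sup_t (f(t) - t w) is the
   supremum of a linear objective over a polyhedron in (t, pi^k), and such a
   supremum is attained when finite, since by Fourier-Motzkin elimination the
   projection of a polyhedron onto a line is closed.  At a maximizer t,
   sum_k (c x^k + t x^k) = g(w) + t w <= sum_k f^k(t), which forces equality
   in each f^k(t) <= c x^k + t x^k. *)
From Pilot Require Import Defs.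
From HB Require Import structures.
From mathcomp Require Import all_boot all_order all_algebra.
From mathcomp Require Import all_classical all_reals ereal.
From mathcomp Require Import lra ring.
Set Implicit Arguments. Unset Strict Implicit. Unset Printing Implicit Defensive.
Import Order.TTheory GRing.Theory Num.Theory.
Local Open Scope classical_set_scope.
Local Open Scope ring_scope.

Section FourierMotzkin.
Variable R : realFieldType.

Lemma exists_between (Ls Us : seq R) :
  {in Ls & Us, forall l u, l <= u} ->
  exists s, {in Ls, forall l, l <= s} /\ {in Us, forall u, s <= u}.
Proof.
elim: Ls => [|l Ls IH] leLU.
  elim: Us {leLU} => [|u Us [s [_ le_sUs]]]; first by exists 0.
  exists (Num.min s u); split=> // v; rewrite inE => /predU1P[->|/le_sUs le_sv].
    by rewrite ge_min lexx orbT.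
  by rewrite ge_min le_sv.
have [l' u l'Ls uUs|s [le_Ls_s le_s_Us]] := IH; first by rewrite leLU ?inE ?l'Ls ?orbT.
exists (Num.max l s); split=> [v|u uUs].
  by rewrite inE => /predU1P[->|/le_Ls_s le_vs]; rewrite le_max ?lexx ?le_vs ?orbT.
by rewrite ge_max le_s_Us // leLU ?mem_head.
Qed.

(* (a, β, b) : ineq n stands for the inequality a z + β·y <= b in the
   unknowns z : R and y : 'I_n -> R. *)
Definition ineq n := (R * {ffun 'I_n -> R} * R)%type.

Definition sat_ineqs n (S : seq (ineq n)) (z : R) (y : 'I_n -> R) :=
  forall p, p \in S -> p.1.1 * z + \sum_i p.1.2 i * y i <= p.2.

Section Elimination.
Variable n : nat.
Implicit Types (p q : ineq n.+1) (S : seq (ineq n.+1)) (y : 'I_n -> R).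

Definition lastc p : R := p.1.2 ord_max.
Definition initc p : {ffun 'I_n -> R} := [ffun j => p.1.2 (widen_ord (leqnSn n) j)].
Definition init_lhs p z y := p.1.1 * z + \sum_j initc p j * y j.

Definition fm_combine p q : ineq n :=
  (- lastc q * p.1.1 + lastc p * q.1.1,
   [ffun j => - lastc q * initc p j + lastc p * initc q j],
   - lastc q * p.2 + lastc p * q.2).

Definition fm_eliminate S : seq (ineq n) :=
  [seq (p.1.1, initc p, p.2) | p <- S & lastc p == 0] ++
  [seq fm_combine p q | p <- [seq p <- S | 0 < lastc p],
                        q <- [seq q <- S | lastc q < 0]].

Lemma fm_combine_lhs p q z y :
  (fm_combine p q).1.1 * z + \sum_j (fm_combine p q).1.2 j * y j =
  - lastc q * init_lhs p z y + lastc p * init_lhs q z y.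
Proof.
rewrite /init_lhs /= (eq_bigr (fun j => - lastc q * (initc p j * y j) +
  lastc p * (initc q j * y j))) => [|j _]; last by rewrite ffunE; ring.
rewrite big_split /= -!mulr_sumr; ring.
Qed.

Lemma lhs_split p z (y : 'I_n.+1 -> R) :
  p.1.1 * z + \sum_i p.1.2 i * y i =
  init_lhs p z (fun j => y (widen_ord (leqnSn n) j)) + lastc p * y ord_max.
Proof.
by rewrite big_ord_recr /= addrA; congr (_ + _ + _); apply: eq_bigr => j _; rewrite ffunE.
Qed.

Lemma fm_eliminateP S z y :
  (exists s, forall p, p \in S -> init_lhs p z y + lastc p * s <= p.2) <->
  sat_ineqs (fm_eliminate S) z y.
Proof.
split=> [[s leS] p|satS].
  rewrite mem_cat => /orP[/mapP[p0]|/allpairsP[[p0 q0] /= []]].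
    by rewrite mem_filter => /andP[/eqP p00 /leS] + ->; rewrite p00 mul0r addr0.
  rewrite !mem_filter => /andP[p0_gt0 /leS le_p0] /andP[q0_lt0 /leS le_q0] ->.
  rewrite fm_combine_lhs /=.
  have Nq0_ge0 : 0 <= - lastc q0 by rewrite oppr_ge0 ltW.
  have := ler_wpM2l (ltW p0_gt0) le_q0; have := ler_wpM2l Nq0_ge0 le_p0.
  set a := init_lhs p0 z y; set b := init_lhs q0 z y; nra.
pose Ls := [seq (q.2 - init_lhs q z y) / lastc q | q <- [seq q <- S | lastc q < 0]].
pose Us := [seq (p.2 - init_lhs p z y) / lastc p | p <- [seq p <- S | 0 < lastc p]].
have [s [le_Ls_s le_s_Us]] :
    exists s, {in Ls, forall l, l <= s} /\ {in Us, forall u, s <= u}.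
  apply: exists_between => _ _ /mapP[q qS ->] /mapP[p pS ->].
  move: qS pS; rewrite !mem_filter => /andP[q_lt0 qS] /andP[p_gt0 pS].
  have /satS : fm_combine p q \in fm_eliminate S.
    rewrite mem_cat; apply/orP; right; apply/allpairsP.
    by exists (p, q); rewrite !mem_filter p_gt0 q_lt0 pS qS.
  rewrite fm_combine_lhs /= ler_ndivrMr // mulrAC ler_pdivrMr //.
  set a := init_lhs p z y; set b := init_lhs q z y; nra.
exists s => p pS; case: (ltgtP (lastc p) 0) => [p_lt0|p_gt0|p0].
- have /le_Ls_s : (p.2 - init_lhs p z y) / lastc p \in Ls.
    by apply/mapP; exists p; rewrite ?mem_filter ?p_lt0.
  by rewrite ler_ndivrMr // mulrC; lra.
- have /le_s_Us : (p.2 - init_lhs p z y) / lastc p \in Us.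
    by apply/mapP; exists p; rewrite ?mem_filter ?p_gt0.
  by rewrite ler_pdivlMr // mulrC; lra.
- rewrite p0 mul0r addr0; apply: (satS (p.1.1, initc p, p.2)).
  rewrite mem_cat; apply/orP; left.
  by apply/mapP; exists p; rewrite ?mem_filter ?p0 ?eqxx.
Qed.

Definition extend y (s : R) : 'I_n.+1 -> R := fun i => oapp y s (insub (val i)).

Lemma extend_widen y s j : extend y s (widen_ord (leqnSn n) j) = y j.
Proof. by rewrite /extend /= valK. Qed.

Lemma extend_max y s : extend y s ord_max = s.
Proof. by rewrite /extend /= insubF // ltnn. Qed.

End Elimination.

Lemma fm_projection n (S : seq (ineq n)) : exists S' : seq (R * R), forall z,
  (exists y, sat_ineqs S z y) <-> (forall q, q \in S' -> q.1 * z <= q.2).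
Proof.
elim: n S => [|n IH] S.
  exists [seq (p.1.1, p.2) | p <- S] => z; split=> [[y satS] _ /mapP[p pS ->]|satS].
    by have := satS _ pS; rewrite big_ord0 addr0.
  exists (fun=> 0) => p pS; rewrite big_ord0 addr0.
  by apply: (satS (_, _)); rewrite map_f.
have [S' S'P] := IH (fm_eliminate S); exists S' => z; rewrite -S'P; split.
  move=> [y satS]; exists (fun j => y (widen_ord (leqnSn n) j)); apply/fm_eliminateP.
  by exists (y ord_max) => p /satS; rewrite lhs_split.
move=> [y /fm_eliminateP[s le_s]]; exists (extend y s) => p /le_s.
rewrite lhs_split extend_max.
suff -> : (fun j => extend y s (widen_ord (leqnSn n) j)) = y by [].
by apply/funext => j; rewrite extend_widen.
Qed.

Lemma sat_sup_attained n (S : seq (ineq n)) (M : R) :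
  (forall z y, sat_ineqs S z y -> z <= M) ->
  (forall e, 0 < e -> exists z y, sat_ineqs S z y /\ M - e < z) ->
  exists y, sat_ineqs S M y.
Proof.
move=> le_M approx; have [S' S'P] := fm_projection S; apply/S'P => q qS'.
have sat1 z y : sat_ineqs S z y -> q.1 * z <= q.2.
  by move=> satS; apply: (S'P z).1 qS'; exists y.
have [z0 [y0 [/[dup] /sat1 le_z0 /le_M z0M _]]] := approx 1 ltr01.
case: (lerP q.1 0) => [q1_le0|q1_gt0]; first by apply: le_trans le_z0; rewrite ler_wnM2l.
rewrite leNgt; apply/negP => lt_q2.
have e_gt0 : 0 < (q.1 * M - q.2) / q.1 by rewrite divr_gt0 // subr_gt0.
have [z [y [/sat1 le_z]]] := approx _ e_gt0.
rewrite -(ltr_pM2l q1_gt0) mulrBr mulrCA divff ?gt_eqF // mulr1; lra.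
Qed.

End FourierMotzkin.

Section LinearProgram.
Variables (R : realFieldType) (T J : finType) (B : J -> T -> R) (b : J -> R).
Variable phi : T -> R.

Definition lp_feasible (Y : T -> R) := forall j, \sum_u B j u * Y u <= b j.

Let sum_enum_val (F : T -> R) (y : 'I_#|T| -> R) :
  \sum_i F (enum_val i) * y i = \sum_u F u * y (enum_rank u).
Proof.
rewrite [RHS](reindex (@enum_val T T)); last first.
  by exists enum_rank => i _; rewrite ?enum_valK ?enum_rankK.
by apply: eq_bigr => i _; rewrite enum_valK.
Qed.

(* The first inequality, z - phi·y <= 0, turns the objective into the unknown z. *)
Let lp_ineqs : seq (ineq R #|T|) :=
  (1, [ffun i => - phi (enum_val i)], 0) ::
  [seq (0, [ffun i => B j (enum_val i)], b j) | j <- enum J].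

Let lp_ineqsP z y : sat_ineqs lp_ineqs z y <->
  lp_feasible (y \o enum_rank) /\ z <= \sum_u phi u * (y \o enum_rank) u.
Proof.
have coefE (F : T -> R) :
    \sum_i [ffun i => F (enum_val i)] i * y i = \sum_u F u * y (enum_rank u).
  by rewrite -sum_enum_val; apply: eq_bigr => i _; rewrite ffunE.
have objE : \sum_i [ffun i => - phi (enum_val i)] i * y i =
    - \sum_u phi u * (y \o enum_rank) u.
  by rewrite (coefE (fun u => - phi u)) -sumrN; apply: eq_bigr => u _; rewrite mulNr.
split=> [satS|[feas le_z] p].
  split=> [j|]; last by have := satS _ (mem_head _ _); rewrite /= mul1r objE subr_le0.
  have := satS (0, [ffun i => B j (enum_val i)], b j).
  by rewrite inE map_f ?mem_enum ?orbT //= mul0r add0r coefE => /(_ isT).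
rewrite inE => /predU1P[-> /=|/mapP[j _ -> /=]]; first by rewrite mul1r objE subr_le0.
by rewrite mul0r add0r coefE; apply: feas.
Qed.

Lemma lp_sup_attained (M : R) :
  (forall Y, lp_feasible Y -> \sum_u phi u * Y u <= M) ->
  (forall e, 0 < e -> exists2 Y, lp_feasible Y & M - e < \sum_u phi u * Y u) ->
  exists2 Y, lp_feasible Y & M <= \sum_u phi u * Y u.
Proof.
move=> le_M approx.
suff [y /lp_ineqsP[feas le_obj]] : exists y, sat_ineqs lp_ineqs M y.
  by exists (y \o enum_rank).
apply: sat_sup_attained => [z y /lp_ineqsP[feas le_z]|e /approx[Y feas lt_obj]].
  exact: le_trans le_z (le_M _ feas).
have enum_valK' : (Y \o enum_val) \o enum_rank = Y.
  by apply/funext => u /=; rewrite enum_rankK.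
exists (\sum_u phi u * Y u), (Y \o enum_val); split=> //; apply/lp_ineqsP.
by rewrite enum_valK'.
Qed.

End LinearProgram.

Lemma sumr_delta (R : pzSemiRingType) (T : finType) (u0 : T) (F : T -> R) :
  \sum_u (u == u0)%:R * F u = F u0.
Proof.
rewrite (bigD1 u0) //= eqxx mul1r big1 ?addr0 // => u /negbTE->.
by rewrite mul0r.
Qed.

Lemma eq_of_ler_sum (R : numDomainType) (I : finType) (F G : I -> R) :
  (forall i, F i <= G i) -> \sum_i G i <= \sum_i F i -> forall i, F i = G i.
Proof.
move=> leFG leGF i; apply/esym/eqP; rewrite -subr_eq0; apply/eqP.
apply: (@psumr_eq0P _ _ predT (fun i => G i - F i)) => // [j _|].
  by rewrite subr_ge0.
by apply/eqP; rewrite sumrB subr_eq0 eq_le leGF ler_sum.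
Qed.

Lemma sum_delta_comb (R : pzSemiRingType) (I T : finType) (h : I -> T) (F : I -> R)
    (Y : T -> R) :
  \sum_u (\sum_i (u == h i)%:R * F i) * Y u = \sum_i F i * Y (h i).
Proof.
rewrite (eq_bigr (fun u => \sum_i (u == h i)%:R * (F i * Y u))) => [|u _].
  by rewrite exchange_big; apply: eq_bigr => i _; rewrite sumr_delta.
by rewrite mulr_suml; apply: eq_bigr => i _; rewrite mulrA.
Qed.

Section NetworkPricing.
Variables (R : realType) (V A K : finType) (tail head : A -> V) (c : A -> R).
Variables (A1 : {set A}) (o d : K -> V).
Hypothesis c_ge0 : forall a, 0 <= c a.

Local Notation Xk := (@Xk R V A K tail head o d).
Local Notation fk := (@fk R V A K tail head c A1 o d).
Local Notation Nmul := (@Nmul R V A tail head).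
Local Notation cost := (@cost R A c).
Local Notation dot := (@dot R A A1).
Local Notation restr := (@restrA1 R A A1).
Local Notation gk := (@gk R V A K tail head c A1 o d).
Local Notation indiv := (@indiv_bilevel_feasible R V A K tail head c A1 o d).
Local Notation tolled := (tolled A1).
Local Notation inc := (@incidence R V A tail head).

Definition toll (t : tolled -> R) (a : A) : R := \sum_i (a == val i)%:R * t i.

Definition arc_len t a := c a + toll t a.

Definition feasible_pot t (pi : V -> R) :=
  forall a, pi (head a) - pi (tail a) <= arc_len t a.

Lemma cost_dotE t x : cost x + dot t (restr x) = \sum_a arc_len t a * x a.
Proof.
under eq_bigr do rewrite /arc_len mulrDl.
by rewrite big_split /= sum_delta_comb.
Qed.

Lemma arc_len_ge0 t : nonneg t -> forall a, 0 <= arc_len t a.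
Proof.
move=> /forallP t_ge0 a; rewrite addr_ge0 ?sumr_ge0 // => i _.
by rewrite mulr_ge0 ?ler0n.
Qed.

Lemma flow_potentialE (x : A -> R) (s e : V) (pi : V -> R) :
  (forall v, Nmul x v = (v == s)%:R - (v == e)%:R) ->
  \sum_a x a * (pi (tail a) - pi (head a)) = pi s - pi e.
Proof.
move=> flow_x.
have -> : pi s - pi e = \sum_v pi v * Nmul x v.
  rewrite (eq_bigr (fun v => (v == s)%:R * pi v - (v == e)%:R * pi v)) => [|v _].
    by rewrite sumrB !sumr_delta.
  by rewrite flow_x; ring.
rewrite /Nmul (eq_bigr (fun v => \sum_a pi v * (inc v a * x a))) => [|v _].
  rewrite exchange_big /=; apply: eq_bigr => a _.
  rewrite -(sumr_delta (tail a) pi) -(sumr_delta (head a) pi) -sumrB mulr_sumr.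
  by apply: eq_bigr => v _; rewrite /incidence !(eq_sym v); ring.
by rewrite mulr_sumr.
Qed.

Lemma fk_le k t x : Xk k x -> (fk k t <= (cost x + dot t (restr x))%:E)%E.
Proof.
move=> Xx; rewrite /Defs.fk; case: ifP => _; last exact: leNye.
by apply: ereal_inf_lbound; exists x.
Qed.

Lemma fk_ge0 k t : nonneg t -> (0 <= fk k t)%E.
Proof.
move=> t_ge0; rewrite /Defs.fk t_ge0; apply: le_ereal_inf_tmp => _ [x [_ x_ge0] <-].
by rewrite cost_dotE lee_fin sumr_ge0 // => a _; rewrite mulr_ge0 ?arc_len_ge0.
Qed.

Lemma fk_fin_num k t x : nonneg t -> Xk k x -> fk k t \is a fin_num.
Proof.
by move=> t_ge0 /(fk_le t); move: (fk_ge0 k t_ge0); case: (fk k t).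
Qed.

Lemma fk_ge_pot k t pi : nonneg t -> feasible_pot t pi ->
  ((pi (d k) - pi (o k))%:E <= fk k t)%E.
Proof.
move=> t_ge0 pi_feas; rewrite /Defs.fk t_ge0.
apply: le_ereal_inf_tmp => _ [x [flow_x x_ge0] <-].
rewrite lee_fin cost_dotE -opprB -(flow_potentialE pi flow_x) -sumrN.
by apply: ler_sum => a _; rewrite -mulrN opprB mulrC ler_wpM2r.
Qed.

Lemma Nmul_add_arc (x : A -> R) a v :
  Nmul (fun b => x b + (b == a)%:R) v = Nmul x v + inc v a.
Proof.
rewrite /Nmul (eq_bigr (fun b => inc v b * x b +
  (b == a)%:R * inc v b)) => [|b _]; last by ring.
by rewrite big_split sumr_delta.
Qed.

Lemma exists_pot_ge k t D : nonneg t -> fk k t = D%:E ->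
  exists2 pi, feasible_pot t pi & D <= pi (d k) - pi (o k).
Proof.
move=> t_ge0 fkD.
have D_ge0 : 0 <= D by rewrite -lee_fin -fkD fk_ge0.
pose flow v (x : A -> R) :=
  (forall u, Nmul x u = (u == o k)%:R - (u == v)%:R) /\ (forall a, 0 <= x a).
(* pi v is the length of a shortest o k - v flow, capped at D; the cap keeps
   the infimum over a nonempty set when v is unreachable. *)
pose lens v := [set r | r = D \/ exists2 x, flow v x & r = \sum_a arc_len t a * x a].
pose pi v := inf (lens v).
have lens_lb v : has_lbound (lens v).
  exists 0 => _ [->|[x [_ x_ge0] ->]] //.
  by rewrite sumr_ge0 // => a _; rewrite mulr_ge0 ?arc_len_ge0.
have pi_le v r : lens v r -> pi v <= r by move=> ?; apply: ge_inf.
have le_pi v r : (forall r', lens v r' -> r <= r') -> r <= pi v.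
  by move=> ?; apply: lb_le_inf => //; exists D; left.
exists pi.
  move=> a; rewrite lerBlDr addrC -lerBlDr.
  apply: le_pi => _ [->|[x [flow_x x_ge0] ->]].
    by rewrite lerBlDr (le_trans (pi_le _ _ (or_introl erefl))) // lerDl arc_len_ge0.
  pose x' b := x b + (b == a)%:R.
  have flow_x' : flow (head a) x'.
    split=> [u|b]; last by rewrite addr_ge0.
    by rewrite Nmul_add_arc flow_x /incidence !(eq_sym u); ring.
  have := pi_le _ _ (or_intror (ex_intro2 _ _ x' flow_x' erefl)).
  rewrite (eq_bigr (fun b => arc_len t b * x b + (b == a)%:R * arc_len t b)) => [|b _].
    by rewrite big_split sumr_delta lerBlDr.
  by rewrite /x'; ring.
have pi_o : pi (o k) <= 0.
  apply: pi_le; right; exists (fun=> 0); last by rewrite big1 // => a _; rewrite mulr0.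
  by split=> // u; rewrite subrr /Nmul big1 // => a _; rewrite mulr0.
have D_pi : D <= pi (d k).
  by apply: le_pi => _ [->|[x [? ?] ->]] //; rewrite -lee_fin -cost_dotE -fkD fk_le.
lra.
Qed.

Lemma indivP k x : Xk k x ->
  indiv k x <-> exists t, fk k t = (cost x + dot t (restr x))%:E.
Proof.
move=> Xx; split=> [[_ [[t z] [epi /= zE]]]|[t fkE]].
  exists t; apply/le_anti; rewrite fk_le //=.
  by move: epi; rewrite /epi_neg_fk /= zE leeNl -EFinN opprD !opprK.
split=> [[t' z] /= epi|]; last first.
  by exists (t, - cost x - dot t (restr x)); rewrite /epi_neg_fk /= fkE -EFinN opprD.
by rewrite -lee_fin (le_trans _ epi) // -opprD EFinN leeN2 fk_le.
Qed.

Lemma gk_eq_cost k x t : Xk k x -> fk k t = (cost x + dot t (restr x))%:E ->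
  gk k (restr x) = (cost x)%:E.
Proof.
move=> Xx fkE; apply/le_anti/andP; split.
  by apply: ge_ereal_sup => _ [t' _ <-]; rewrite leeBlDr // -EFinD fk_le.
by apply: ereal_sup_ubound; exists t => //; rewrite fkE -EFinB addrK.
Qed.

Lemma gk_eq_cost_of_indiv k x : Xk k x -> indiv k x -> gk k (restr x) = (cost x)%:E.
Proof. by move=> Xx /(indivP Xx)[t]; apply: gk_eq_cost. Qed.

Local Notation f := (@f R V A K tail head c A1 o d).
Local Notation g := (@g R V A K tail head c A1 o d).
Local Notation sum_restr := (@sum_restr R A K A1).

Lemma dot_sum_restr t (xs : K -> A -> R) :
  \sum_k dot t (restr (xs k)) = dot t (sum_restr xs).
Proof.
rewrite /dot /sum_restr exchange_big /=; apply: eq_bigr => i _.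
by rewrite mulr_sumr.
Qed.

Lemma f_Nnonneg (k0 : K) t : ~~ nonneg t -> f t = -oo%E.
Proof.
by move=> /negbTE t_Nge0; rewrite /Defs.f (bigD1 k0) //= {1}/Defs.fk t_Nge0 addNye.
Qed.

(* A linear program whose value is [g w]: its unknowns are the tolls ([inl])
   and one node potential per commodity ([inr]), it requires [t >= 0] and
   [feasible_pot t] for every potential, and [dual_obj w] gives
   [sum_k (pi_k (d k) - pi_k (o k)) - t·w]; maximizing over the potentials
   first yields [f t - t·w] by shortest-path duality. *)
Definition dual_coef (j : tolled + K * A) (u : tolled + K * V) : R :=
  match j with
  | inl i => - (u == inl i)%:R
  | inr (k, a) => (u == inr (k, head a))%:R - (u == inr (k, tail a))%:R
                  - \sum_i (u == inl i)%:R * (a == val i)%:R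
  end.

Definition dual_rhs (j : tolled + K * A) : R := if j is inr (_, a) then c a else 0.

Definition dual_obj (w : tolled -> R) (u : tolled + K * V) : R :=
  \sum_k ((u == inr (k, d k))%:R - (u == inr (k, o k))%:R)
  - \sum_i (u == inl i)%:R * w i.

Definition dual_tolls (Y : tolled + K * V -> R) (i : tolled) := Y (inl i).

Definition dual_pot (Y : tolled + K * V -> R) k v := Y (inr (k, v)).

Lemma dual_feasibleP Y : lp_feasible dual_coef dual_rhs Y <->
  nonneg (dual_tolls Y) /\ forall k, feasible_pot (dual_tolls Y) (dual_pot Y k).
Proof.
have coefE j : \sum_u dual_coef j u * Y u = match j with
    | inl i => - Y (inl i)
    | inr (k, a) => dual_pot Y k (head a) - dual_pot Y k (tail a) - toll (dual_tolls Y) a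
    end.
  case: j => [i|[k a]] /=.
    by under eq_bigr do rewrite mulNr; rewrite sumrN sumr_delta.
  under eq_bigr do rewrite !mulrBl.
  by rewrite !sumrB !sumr_delta sum_delta_comb.
split=> [feas|[/forallP t_ge0 pot_feas] [i|[k a]]]; last 2 first.
- by rewrite coefE oppr_le0 t_ge0.
- by rewrite coefE /=; have := pot_feas k a; rewrite /arc_len; lra.
split=> [|k a]; first by apply/forallP => i; have := feas (inl i); rewrite coefE oppr_le0.
by have := feas (inr (k, a)); rewrite coefE /arc_len /=; lra.
Qed.

Lemma dual_objE w Y : \sum_u dual_obj w u * Y u =
  \sum_k (dual_pot Y k (d k) - dual_pot Y k (o k)) - dot (dual_tolls Y) w.
Proof.
under eq_bigr do rewrite mulrBl mulr_suml.
rewrite sumrB exchange_big sum_delta_comb /=; congr (_ - _).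
  by apply: eq_bigr => k _; under eq_bigr do rewrite mulrBl; rewrite sumrB !sumr_delta.
by apply: eq_bigr => i _; rewrite mulrC.
Qed.

Section Reactions.
Variable xs : K -> A -> R.
Hypothesis xs_feas : forall k, Xk k (xs k).

Lemma f_fineE t : nonneg t -> f t = (\sum_k fine (fk k t))%:E.
Proof.
move=> t_ge0; rewrite /Defs.f -sumEFin; apply: eq_bigr => k _.
by rewrite fineK // (fk_fin_num t_ge0 (xs_feas k)).
Qed.

Lemma fk_eq_of_sum_le t : nonneg t ->
  \sum_k (cost (xs k) + dot t (restr (xs k))) <= \sum_k fine (fk k t) ->
  forall k, fk k t = (cost (xs k) + dot t (restr (xs k)))%:E.
Proof.
move=> t_ge0 le_sum k; rewrite -(fineK (fk_fin_num t_ge0 (xs_feas k))); congr (_%:E).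
apply: (eq_of_ler_sum _ le_sum) => {}k.
by rewrite -lee_fin fineK ?(fk_fin_num t_ge0 (xs_feas k)) ?fk_le.
Qed.

Lemma fk_eq_of_f_eq t : nonneg t ->
  f t = (\sum_k (cost (xs k) + dot t (restr (xs k))))%:E ->
  forall k, fk k t = (cost (xs k) + dot t (restr (xs k)))%:E.
Proof.
by move=> t_ge0; rewrite f_fineE // => -[le_sum]; apply: fk_eq_of_sum_le; rewrite ?le_sum.
Qed.

Lemma f_eq_of_fk_eq t :
  (forall k, fk k t = (cost (xs k) + dot t (restr (xs k)))%:E) ->
  f t = (\sum_k (cost (xs k) + dot t (restr (xs k))))%:E.
Proof. by move=> fkE; rewrite /Defs.f -sumEFin; apply: eq_bigr => k _. Qed.

Lemma g_eq_cost_of_f_eq t :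
  f t = (\sum_k (cost (xs k) + dot t (restr (xs k))))%:E ->
  (\sum_k cost (xs k))%:E = g (sum_restr xs).
Proof.
move=> ft; apply/le_anti/andP; split.
  apply: ereal_sup_ubound; exists t => //.
  by rewrite ft -EFinB big_split /= dot_sum_restr addrK.
apply: ge_ereal_sup => _ [t' _ <-].
rewrite leeBlDr // -EFinD -dot_sum_restr -big_split /Defs.f -sumEFin.
by apply: lee_sum => k _; apply: fk_le.
Qed.

Lemma sum_gk_eq_cost : (forall k, indiv k (xs k)) ->
  \sum_k gk k (restr (xs k)) = (\sum_k cost (xs k))%:E.
Proof.
by move=> indiv; rewrite -sumEFin; apply: eq_bigr => k _; rewrite gk_eq_cost_of_indiv.
Qed.

Lemma dual_obj_le_cost Y : lp_feasible dual_coef dual_rhs Y ->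
  \sum_u dual_obj (sum_restr xs) u * Y u <= \sum_k cost (xs k).
Proof.
move=> /dual_feasibleP[t_ge0 pot_feas].
rewrite dual_objE -dot_sum_restr lerBlDr -big_split /=; apply: ler_sum => k _.
by rewrite -lee_fin (le_trans (fk_ge_pot k t_ge0 (pot_feas k))) ?fk_le.
Qed.

Lemma dual_obj_approx (k0 : K) :
  (\sum_k cost (xs k))%:E = g (sum_restr xs) -> forall e, 0 < e ->
  exists2 Y, lp_feasible dual_coef dual_rhs Y &
    \sum_k cost (xs k) - e < \sum_u dual_obj (sum_restr xs) u * Y u.
Proof.
move=> gw e e_gt0.
have gw_fin : g (sum_restr xs) \is a fin_num by rewrite -gw.
have [_ [t _ <-] lt_e] := ub_ereal_sup_adherent e_gt0 gw_fin.
move: lt_e; rewrite -[ereal_sup _]/(g (sum_restr xs)) -gw.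
have [t_ge0|/(f_Nnonneg k0)->] := boolP (nonneg t); last by rewrite addNye ltNge leNye.
have pot k : exists p, feasible_pot t p /\ fine (fk k t) <= p (d k) - p (o k).
  have [p] := exists_pot_ge t_ge0 (esym (fineK (fk_fin_num t_ge0 (xs_feas k)))).
  by exists p.
have [pi pi_ge] := choice pot.
pose Y u := match u with inl i => t i | inr (k, v) => pi k v end.
exists Y; first by apply/dual_feasibleP; split=> // k; have [] := pi_ge k.
move: lt_e; rewrite (f_fineE t_ge0) -EFinB lte_fin dual_objE => lt_e.
apply: (lt_le_trans lt_e); rewrite lerD2r; apply: ler_sum => k _.
by have [] := pi_ge k.
Qed.

Lemma fk_eq_of_g_eq : (\sum_k cost (xs k))%:E = g (sum_restr xs) ->
  exists2 t, nonneg t & forall k, fk k t = (cost (xs k) + dot t (restr (xs k)))%:E.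
Proof.
move=> gw; case: (pickP (@predT K)) => [k0 _|K0]; last first.
  by exists (fun=> 0) => [|k]; [apply/forallP | have := K0 k].
have [Y /dual_feasibleP[t_ge0 pot_feas]] :=
  lp_sup_attained dual_obj_le_cost (dual_obj_approx k0 gw).
rewrite dual_objE -dot_sum_restr lerBrDr -big_split => le_pot.
exists (dual_tolls Y) => //; apply: fk_eq_of_sum_le => //.
apply: (le_trans le_pot); apply: ler_sum => k _.
by rewrite -lee_fin fineK ?(fk_fin_num t_ge0 (xs_feas k)) ?fk_ge_pot.
Qed.

End Reactions.
End NetworkPricing.

Theorem proposition5 (R : realType) (V A K : finType)
    (tail head : A -> V) (c : A -> R) (A1 : {set A}) (o d : K -> V)
    (Hsimple : injective (fun a => (tail a, head a)))
    (Hc : forall a, 0 <= c a)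
    (HA1ne : exists a, a \in A1) (HA1proper : exists a, a \notin A1)
    (Hod : forall k, o k != d k)
    (Hpath : forall k, exists p : seq A,
        walk tail head (o k) p (d k) && all (fun a => a \notin A1) p)
    (xs : K -> A -> R) (Hxs : forall k, @Xk R V A K tail head o d k (xs k)) :
  let f := @f R V A K tail head c A1 o d in
  let fk := @fk R V A K tail head c A1 o d in
  let g := @g R V A K tail head c A1 o d in
  let gk := @gk R V A K tail head c A1 o d in
  let cost := @cost R A c in
  let dot := @dot R A A1 in
  let restr := @restrA1 R A A1 in
  let w := @sum_restr R A K A1 xs in
  [<-> @bilevel_feasible R V A K tail head c A1 o d xs;
       ((\sum_(k : K) cost (xs k))%:E = g w)%E;
       (forall k, @indiv_bilevel_feasible R V A K tail head c A1 o d k (xs k)) /\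
         (g w = \sum_(k : K) gk k (restr (xs k)))%E;
       exists t : tolled A1 -> R, @nonneg R A A1 t /\
         f t = (\sum_(k : K) (cost (xs k) + dot t (restr (xs k))))%:E;
       exists t : tolled A1 -> R, @nonneg R A A1 t /\
         forall k, fk k t = (cost (xs k) + dot t (restr (xs k)))%:E].
Proof.
cbv zeta.
tfae=> [//|gw|[indiv gw]|[t [t_ge0 ft]]|[t [_ fkE]]].
- have [t _ fkE] := fk_eq_of_g_eq Hc Hxs gw.
  have indiv k : indiv_bilevel_feasible tail head c A1 o d k (xs k).
    by apply/(indivP c A1 (Hxs k)); exists t.
  by split=> //; rewrite -gw (sum_gk_eq_cost Hxs indiv).
- rewrite (sum_gk_eq_cost Hxs indiv) in gw.
  have [t t_ge0 fkE] := fk_eq_of_g_eq Hc Hxs (esym gw).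
  by exists t; split=> //; apply: f_eq_of_fk_eq.
- by exists t; split=> //; apply: fk_eq_of_f_eq.
- exact/(g_eq_cost_of_f_eq Hxs)/f_eq_of_fk_eq.
Qed.
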